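(* Let $\lambda\neq0$. For every integer $k\ge0$ and every positive integer $N$, $$\frac12\sum_{n=0}^{k+N}E_n\lambda^n S_1(k+N,n)=(-1)^N\lambda\sum_{i=1}^{N+1}a_{i-1}(N;\lambda)\sum_{l=0}^{k}\binom{k}{l}(-1)^l(N+l-1)_l\sum_{n=0}^{k-l}2^{-i}E_n^{(i)}\lambda^nS_1(k-l,n).$$
   Context: $(x)_n=x(x-1)\cdots(x-n+1)$, $(x)_0=1$. The Euler numbers $E_n$ and higher-order Euler numbers $E_n^{(r)}$ are defined by $\frac{2}{e^t+1}=\sum_{n\ge0}E_n\frac{t^n}{n!}$ and $\left(\frac{2}{e^t+1}\right)^r=\sum_{n\ge0}E_n^{(r)}\frac{t^n}{n!}$. $S_1(n,k)$ are the (signed) Stirling numbers of the first kind, given by $\frac{(\log(1+t))^k}{k!}=\sum_{n\ge k}S_1(n,k)\frac{t^n}{n!}$. The numbers $a_i(N;\lambda)$ are defined recursively by $a_0(0;\lambda)=1/\lambda$ and, for $N\ge0$: $a_0(N+1;\lambda)=(N+\lambda)a_0(N;\lambda)$, $a_{N+1}(N+1;\lambda)=-(N+1)\lambda a_N(N;\lambda)$, $a_k(N+1;\lambda)=-k\lambda a_{k-1}(N;\lambda)+(N+(k+1)\lambda)a_k(N;\lambda)$ for $1\le k\le N$; they are the coefficients for which $\left(\frac{d}{dt}\right)^N F=\frac{(-1)^N\lambda}{(1+t)^N}\sum_{i=1}^{N+1}a_{i-1}(N;\lambda)F^i$ with $F=\frac{1}{(1+t)^\lambda+1}$. *)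

From HB Require Import structures.
From mathcomp Require Import all_boot all_order all_algebra.
Set Implicit Arguments. Unset Strict Implicit. Unset Printing Implicit Defensive.
Import Order.TTheory GRing.Theory Num.Theory.
Local Open Scope ring_scope.

(* All power-series definitions below are the coefficientwise unfolding of the
   generating functions of the paper, computed in rat (ordinary coefficients,
   i.e. the coefficient of t^n, not t^n/n!). *)

(* Ordinary coefficients f_n of F(t) = 2/(e^t+1), determined by
   (e^t + 1) F(t) = 2, i.e.  sum_{j<=n} f_j/(n-j)! + f_n = 2 [n=0]. *)
Fixpoint euler_ocoef_seq (n : nat) : seq rat :=
  match n with
  | 0 => [:: 1]
  | n'.+1 =>
      let s := euler_ocoef_seq n' in
      rcons s ((- \sum_(j < n'.+1) s`_j / ((n'.+1 - j)`!)%:R) / 2%:R)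
  end.

Definition euler_ocoef (n : nat) : rat := (euler_ocoef_seq n)`_n.

Definition Euler (n : nat) : rat := (n`!)%:R * euler_ocoef n.

(* Ordinary coefficients of (2/(e^t+1))^r (Cauchy product). *)
Fixpoint eulerh_ocoef (r n : nat) : rat :=
  match r with
  | 0 => (n == 0)%:R
  | r'.+1 => \sum_(j < n.+1) euler_ocoef j * eulerh_ocoef r' (n - j)
  end.

Definition EulerH (r n : nat) : rat := (n`!)%:R * eulerh_ocoef r n.

Definition log1p_coef (m : nat) : rat :=
  if m is m'.+1 then (-1) ^+ m' / (m'.+1)%:R else 0.

Fixpoint powlog_coef (k n : nat) : rat :=
  match k with
  | 0 => (n == 0)%:R
  | k'.+1 => \sum_(m < n.+1) log1p_coef m * powlog_coef k' (n - m)
  end.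

(* Signed Stirling numbers of the first kind:
   (log(1+t))^k / k! = sum_n S1(n,k) t^n/n!. *)
Definition Stirling1 (n k : nat) : rat := (n`!)%:R / (k`!)%:R * powlog_coef k n.

(* The numbers a_k(N; lambda), given by the recursion of the paper;
   a_k(N; lambda) = 0 outside 0 <= k <= N. *)
Fixpoint acoef {R : fieldType} (lam : R) (N k : nat) : R :=
  match N with
  | 0 => if k == 0%N then lam^-1 else 0
  | N'.+1 =>
      if k == 0%N then (N'%:R + lam) * acoef lam N' 0
      else if k == N'.+1 then - (N'.+1)%:R * lam * acoef lam N' N'
      else if (k <= N')%N then
        - k%:R * lam * acoef lam N' k.-1 + (N'%:R + (k.+1)%:R * lam) * acoef lam N' k
      else 0
  end.

(* With F(t) = 1/((1+t)^lam + 1) = E(lam log(1+t))/2, where E(s) = 2/(e^s+1)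
   satisfies E' = E^2/2 - E, one gets (1+t) F' = lam (F^2 - F).  Induction on N
   then shows (1+t)^N F^(N) = (-1)^N lam A_N(F) with A_N = sum_i a_(i-1)(N;lam) X^i,
   since the recursion of the a_k is exactly the one produced by differentiating.
   Multiplying by (1+t)^-N = sum_l (-1)^l C(N+l-1,l) t^l and comparing the
   coefficients of t^k gives the identity, because
   m! [t^m] F^i = sum_n 2^-i E_n^(i) lam^n S_1(m,n).
   Power series are handled as polynomials compared modulo X^n (eqXn). *)

From HB Require Import structures.
From mathcomp Require Import all_boot all_order all_algebra.
From mathcomp Require Import zify ring.
Set Implicit Arguments. Unset Strict Implicit. Unset Printing Implicit Defensive.
Import Order.TTheory GRing.Theory Num.Theory.
Local Open Scope ring_scope.

Lemma big_ord_widen0 (V : nmodType) (f : nat -> V) a b : (a <= b)%N ->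
  (forall i, (a <= i < b)%N -> f i = 0) ->
  \sum_(i < a) f i = \sum_(i < b) f i.
Proof.
move=> hab f0; rewrite (big_ord_widen _ _ hab) big_mkcond /=.
by apply: eq_bigr => i _; case: ltnP => // hai; rewrite f0 // hai ltn_ord.
Qed.

Lemma bin_ffact_fact k l m : (l <= k)%N ->
  ('C(k, l) * m ^_ l * (k - l)`! = k`! * 'C(m, l))%N.
Proof. by move=> hlk; rewrite -bin_ffact -(bin_fact hlk); ring. Qed.

Section TruncatedCongruence.

Variable R : comNzRingType.
Implicit Types p q s : {poly R}.

Definition eqXn n p q := exists r, p - q = 'X^n * r.

Lemma eqXnP n p q : eqXn n p q <-> (forall i, (i < n)%N -> p`_i = q`_i).
Proof.
split=> [[r hr] i hi|h].
  by apply/eqP; rewrite -subr_eq0 -coefB hr coefXnM hi.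
exists (drop_poly n (p - q)).
have ht : take_poly n (p - q) = 0.
  apply/polyP=> i; rewrite coef_take_poly coef0 coefB.
  by case: ifP => // hi; rewrite h // subrr.
by rewrite -{1}(poly_take_drop n (p - q)) ht add0r mulrC.
Qed.

Lemma eqXn_refl n p : eqXn n p p.
Proof. by exists 0; rewrite subrr mulr0. Qed.

Lemma eqXn_eq n p q : p = q -> eqXn n p q.
Proof. by move=> ->; apply: eqXn_refl. Qed.

Lemma eqXn_sym n p q : eqXn n p q -> eqXn n q p.
Proof. by move=> [r hr]; exists (- r); rewrite mulrN -hr opprB. Qed.

Lemma eqXn_trans n p q s : eqXn n p q -> eqXn n q s -> eqXn n p s.
Proof.
by move=> [r1 h1] [r2 h2]; exists (r1 + r2); rewrite mulrDr -h1 -h2 addrA subrK.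
Qed.

Lemma eqXnW m n p q : (m <= n)%N -> eqXn n p q -> eqXn m p q.
Proof.
by move=> hmn /eqXnP h; apply/eqXnP => i hi; apply: h; apply: leq_trans hmn.
Qed.

Lemma eqXnD n p q p' q' : eqXn n p q -> eqXn n p' q' -> eqXn n (p + p') (q + q').
Proof. by move=> [r1 h1] [r2 h2]; exists (r1 + r2); rewrite mulrDr -h1 -h2; ring. Qed.

Lemma eqXnN n p q : eqXn n p q -> eqXn n (- p) (- q).
Proof. by move=> [r h]; exists (- r); rewrite mulrN -h; ring. Qed.

Lemma eqXnB n p q p' q' : eqXn n p q -> eqXn n p' q' -> eqXn n (p - p') (q - q').
Proof. by move=> h1 h2; apply/eqXnD/eqXnN. Qed.

Lemma eqXnM n p q p' q' : eqXn n p q -> eqXn n p' q' -> eqXn n (p * p') (q * q').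
Proof.
move=> [r1 h1] [r2 h2]; exists (r1 * p' + q * r2).
have -> : p * p' - q * q' = (p - q) * p' + q * (p' - q') by ring.
by rewrite h1 h2; ring.
Qed.

Lemma eqXnZ n (c : R) p q : eqXn n p q -> eqXn n (c *: p) (c *: q).
Proof. by rewrite -!mul_polyC; apply/eqXnM/eqXn_refl. Qed.

Lemma eqXn_deriv n p q : eqXn n p q -> eqXn n.-1 p^`() q^`().
Proof.
move=> /eqXnP h; apply/eqXnP => i hi; rewrite !coef_deriv h //.
by case: n h hi.
Qed.

Lemma eqXn_comp n p q s : s`_0 = 0 -> eqXn n p q -> eqXn n (p \Po s) (q \Po s).
Proof.
move=> s0 [r hr].
have [s' hs'] : eqXn 1 s 0.
  by apply/eqXnP => i; rewrite ltnS leqn0 => /eqP ->; rewrite s0 coef0.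
rewrite subr0 expr1 in hs'.
exists (s' ^+ n * (r \Po s)).
by rewrite -comp_polyB hr comp_polyM comp_Xn_poly {1}hs' exprMn; ring.
Qed.

Lemma coef_exp_vanish p n m : p`_0 = 0 -> (m < n)%N -> (p ^+ n)`_m = 0.
Proof.
move=> p0; elim: n m => [|n ih] m // hm.
rewrite exprS coefM big1 // => -[[|j] hj] _ /=; first by rewrite p0 mul0r.
by rewrite ih ?mulr0 //; lia.
Qed.

Lemma coef_comp_poly_val0 p q m : q`_0 = 0 ->
  (p \Po q)`_m = \sum_(n < m.+1) p`_n * (q ^+ n)`_m.
Proof.
move=> q0; rewrite coef_comp_poly.
pose f n := p`_n * (q ^+ n)`_m.
rewrite (big_ord_widen0 (f := f) (leq_maxl (size p) m.+1)); last first.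
  by move=> i /andP [hi _]; rewrite /f nth_default ?mul0r.
rewrite [RHS](big_ord_widen0 (f := f) (leq_maxr (size p) m.+1)) // => i /andP [hi _].
by rewrite /f coef_exp_vanish ?mulr0.
Qed.

End TruncatedCongruence.

Lemma eqXn_cancel (R : idomainType) n (c p q : {poly R}) :
  c`_0 != 0 -> eqXn n (p * c) (q * c) -> eqXn n p q.
Proof.
move=> c0 /eqXnP h; apply/eqXnP.
have hD j : (j < n)%N -> ((p - q) * c)`_j = 0.
  by move=> hj; rewrite mulrBl coefB h // subrr.
suff D0 i : (i < n)%N -> (p - q)`_i = 0.
  by move=> i /D0 /eqP; rewrite coefB subr_eq0 => /eqP.
elim/ltn_ind: i => i ih hi.
have := hD i hi; rewrite mulrC coefM big_ord_recl subn0 big1 ?addr0 => [/eqP|j _].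
  by rewrite mulf_eq0 (negbTE c0) => /eqP.
by rewrite ih ?mulr0 //= /bump; have := ltn_ord j; lia.
Qed.

Section RingSeries.

Variable R : comNzRingType.

Lemma fact_coef_derivn (p : {poly R}) N k :
  (k`!)%:R * p^`(N)`_k = ((N + k)`!)%:R * p`_(N + k).
Proof.
rewrite coef_derivn mulrnAr -mulrnAl -mulrnA mulnC.
by rewrite -{2}(addKn N k) ffact_fact // leq_addr.
Qed.

Lemma pow1pX_derivnS (p : {poly R}) N :
  (1 + 'X) ^+ N.+1 * p^`(N.+1)
  = (1 + 'X) * ((1 + 'X) ^+ N * p^`(N))^`() - N%:R *: ((1 + 'X) ^+ N * p^`(N)).
Proof.
rewrite derivM deriv_exp derivD derivC derivX add0r mul1r -derivnS scaler_nat.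
case: N => [|N] /=; first by rewrite !mulr0n expr0 mul0r add0r subr0 mul1r expr1.
by rewrite !exprS; ring.
Qed.

Definition inv_pow1pX_gf T N : {poly R} :=
  \poly_(l < T) ((-1) ^+ l * ('C(N + l - 1, l))%:R).

Lemma inv_pow1pX_gfS T N :
  eqXn T ((1 + 'X) * inv_pow1pX_gf T N.+1) (inv_pow1pX_gf T N).
Proof.
apply/eqXnP => -[|i] hi; rewrite mulrDl mul1r coefD coefXM !coef_poly hi //=.
  by rewrite !bin0 addr0.
rewrite ltnW // (_ : N.+1 + i.+1 - 1 = (N + i).+1)%N; last by lia.
rewrite (_ : N.+1 + i - 1 = N + i)%N; last by lia.
rewrite (_ : N + i.+1 - 1 = N + i)%N; last by lia.
by rewrite binS natrD exprS mulN1r; ring.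
Qed.

Lemma inv_pow1pX_gfP T N : eqXn T (inv_pow1pX_gf T N * (1 + 'X) ^+ N) 1.
Proof.
elim: N => [|N ih].
  rewrite expr0 mulr1; apply/eqXnP => -[|i] hi; rewrite coef_poly hi coef1 //=.
    by rewrite mulr1.
  by rewrite subn1 /= bin_small // mulr0.
apply: eqXn_trans ih; rewrite exprS mulrCA mulrA.
exact/eqXnM/eqXn_refl/inv_pow1pX_gfS.
Qed.

End RingSeries.

Arguments inv_pow1pX_gf {R} T N.

Lemma size_euler_ocoef_seq n : size (euler_ocoef_seq n) = n.+1.
Proof. by elim: n => //= n ih; rewrite size_rcons ih. Qed.

Lemma nth_euler_ocoef_seq n j : (j <= n)%N -> (euler_ocoef_seq n)`_j = euler_ocoef j.
Proof.
elim: n j => [|n ih] j hj; first by case: j hj.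
rewrite /= nth_rcons size_euler_ocoef_seq.
case: ltnP => hjn; first by rewrite ih.
have -> : j = n.+1 by apply/eqP; rewrite eqn_leq hj hjn.
by rewrite eqxx /euler_ocoef /= nth_rcons size_euler_ocoef_seq ltnn eqxx.
Qed.

Lemma euler_ocoef_conv n : (0 < n)%N ->
  \sum_(j < n.+1) euler_ocoef j / ((n - j)`!)%:R + euler_ocoef n = 0.
Proof.
case: n => // n _; rewrite big_ord_recr /= subnn fact0 divr1.
rewrite {2 3}/euler_ocoef /= nth_rcons size_euler_ocoef_seq ltnn eqxx.
set S := \sum_(_ < _) _; set S' := \sum_(_ < _) _.
suff -> : S' = S by field.
by apply: eq_bigr => j _; rewrite nth_euler_ocoef_seq // -ltnS.
Qed.

Lemma Euler_EulerH1 n : Euler n = EulerH 1 n.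
Proof.
rewrite /Euler /EulerH /= big_ord_recr /= subnn mulr1 big1 ?add0r // => j _.
by rewrite subn_eq0 leqNgt ltn_ord mulr0.
Qed.

Section EulerSeries.

Variable R : numFieldType.
Implicit Types (T : nat) (lam : R).

Lemma fact_neq0 n : (n`!)%:R != 0 :> R.
Proof. by rewrite pnatr_eq0 -lt0n fact_gt0. Qed.

Definition exp_gf T : {poly R} := \poly_(j < T) ((j`!)%:R)^-1.
Definition euler_gf T : {poly R} := \poly_(j < T) ratr (euler_ocoef j).
Definition log1p_gf T : {poly R} := \poly_(m < T) ratr (log1p_coef m).

Definition Fgf T lam : {poly R} := 2^-1 *: (euler_gf T \Po (lam *: log1p_gf T)).

Lemma euler_gf_mul T : eqXn T (euler_gf T * (exp_gf T + 1)) 2%:P.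
Proof.
apply/eqXnP => i hi; rewrite mulrDr mulr1 coefD coefM coefC !coef_poly hi.
have -> : \sum_(j < i.+1) (euler_gf T)`_j * (exp_gf T)`_(i - j)
    = ratr (\sum_(j < i.+1) euler_ocoef j / ((i - j)`!)%:R).
  rewrite rmorph_sum; apply: eq_bigr => j _; rewrite !coef_poly.
  have hj : (j < T)%N by apply: leq_ltn_trans hi; rewrite -ltnS.
  have hij : (i - j < T)%N by apply: leq_ltn_trans hi; apply: leq_subr.
  by rewrite hj hij rmorphM fmorphV rmorph_nat.
case: i hi => [|i] hi /=; first by rewrite big_ord1 /= fact0 divr1 rmorph1.
by rewrite -rmorphD euler_ocoef_conv // rmorph0.
Qed.

Lemma exp_gf_deriv T : eqXn T.-1 (exp_gf T)^`() (exp_gf T).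
Proof.
apply/eqXnP => i hi; rewrite coef_deriv !coef_poly.
have hi1 : (i.+1 < T)%N by case: T hi.
rewrite hi1 ltnW // factS natrM invfM -mulrnAl -[_^-1 *+ _]mulr_natr.
by rewrite mulVf ?mul1r // pnatr_eq0.
Qed.

Lemma euler_gf_deriv T :
  eqXn T.-1 (euler_gf T)^`() (2^-1 *: euler_gf T ^+ 2 - euler_gf T).
Proof.
set E := euler_gf T; set X := exp_gf T.
have hEX := euler_gf_mul T; rewrite -/E -/X in hEX.
have hE'X : eqXn T.-1 (E^`() * (X + 1)) (- (E * X)).
  have e : E^`() * (X + 1) = (E * (X + 1))^`() - E * X^`().
    by rewrite derivM derivD derivC addr0 addrK.
  rewrite e -[- (E * X)]add0r; apply: eqXnB.
    by have := eqXn_deriv hEX; rewrite derivC.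
  exact/eqXnM/exp_gf_deriv/eqXn_refl.
have hRX : eqXn T.-1 ((2^-1 *: E ^+ 2 - E) * (X + 1)) (- (E * X)).
  have -> : (2^-1 *: E ^+ 2 - E) * (X + 1) = (2^-1 *: E) * (E * (X + 1)) - E * (X + 1).
    by rewrite -!mul_polyC; ring.
  apply: (@eqXn_trans _ _ _ ((2^-1 *: E) * 2%:P - E * (X + 1))).
    exact/(eqXnW (leq_pred T))/eqXnB/eqXn_refl/eqXnM/hEX/eqXn_refl.
  have -> : 2^-1 *: E * 2%:P = E.
    by rewrite -mul_polyC mulrAC -polyCM mulVf ?pnatr_eq0 // polyC1 mul1r.
  by apply: eqXn_eq; ring.
apply: (eqXn_cancel (c := X + 1)); last exact: eqXn_trans hE'X (eqXn_sym hRX).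
rewrite coefD coef1 eqxx /X coef_poly.
case: T {hEX hE'X hRX X E} => [|T]; first by rewrite add0r oner_neq0.
by rewrite fact0 invr1 (_ : 1 + 1 = 2%:R) // pnatr_eq0.
Qed.

Lemma coef_poly_ratr_exp T (f : nat -> rat) (g : nat -> nat -> rat) :
    (forall n, g 0%N n = (n == 0)%:R) ->
    (forall r n, g r.+1 n = \sum_(j < n.+1) f j * g r (n - j)%N) ->
  forall r n, (n < T)%N -> ((\poly_(j < T) ratr (f j) : {poly R}) ^+ r)`_n = ratr (g r n).
Proof.
move=> g0 gS; elim=> [|r ih] n hn; first by rewrite expr0 coef1 g0 rmorph_nat.
rewrite exprS coefM gS rmorph_sum; apply: eq_bigr => j _.
have hj : (j < T)%N by apply: leq_ltn_trans hn; rewrite -ltnS.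
have hnj : (n - j < T)%N by apply: leq_ltn_trans hn; apply: leq_subr.
by rewrite coef_poly hj ih // rmorphM.
Qed.

Lemma coef_euler_gf_exp T r n : (n < T)%N ->
  (euler_gf T ^+ r)`_n = ratr (eulerh_ocoef r n).
Proof. by apply: coef_poly_ratr_exp. Qed.

Lemma coef0_log1p_gf T : (log1p_gf T)`_0 = 0.
Proof. by rewrite coef_poly; case: T => //= T; rewrite rmorph0. Qed.

Lemma coef_log1p_gf_exp T k m : (m < T)%N ->
  (log1p_gf T ^+ k)`_m = ratr (powlog_coef k m).
Proof. by apply: coef_poly_ratr_exp. Qed.

Lemma log1p_gf_deriv T : eqXn T.-1 ((1 + 'X) * (log1p_gf T)^`()) 1.
Proof.
apply/eqXnP => i hi; rewrite mulrDl mul1r coefD coefXM !coef_deriv !coef_poly coef1.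
have hn0 m : (m.+1%:R : R) != 0 by rewrite pnatr_eq0.
case: i hi => [|i] hi /=.
  have -> : (1 < T)%N by case: T hi.
  by rewrite addr0 /log1p_coef expr0 divr1 rmorph1.
have -> : (i.+2 < T)%N by case: T hi.
have -> : (i.+1 < T)%N by case: T hi => //= T hi; lia.
rewrite /log1p_coef !rmorphM !fmorphV !rmorphXn rmorphN rmorph1 !rmorph_nat.
rewrite -[_ / _ *+ i.+2]mulr_natr -[_ / _ *+ i.+1]mulr_natr !divfK //.
by rewrite exprS mulN1r addNr.
Qed.

Lemma coef0_lam_log1p_gf T lam : (lam *: log1p_gf T)`_0 = 0.
Proof. by rewrite coefZ coef0_log1p_gf mulr0. Qed.

Lemma coef_Fgf_exp T lam i m : (m < T)%N ->
  (m`!)%:R * (Fgf T lam ^+ i)`_m =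
  \sum_(n < m.+1) (2^-1) ^+ i * ratr (EulerH i n) * lam ^+ n * ratr (Stirling1 m n).
Proof.
move=> hm; rewrite /Fgf exprZn -rmorphXn coefZ /=.
rewrite coef_comp_poly_val0 ?coef0_lam_log1p_gf // !mulr_sumr.
apply: eq_bigr => n _; have hn : (n < T)%N by apply: leq_ltn_trans hm; rewrite -ltnS.
rewrite exprZn coefZ coef_euler_gf_exp // coef_log1p_gf_exp //.
rewrite /EulerH /Stirling1 !rmorphM fmorphV !rmorph_nat.
by move: (fact_neq0 n) (fact_neq0 m) => n0 m0; field.
Qed.

Lemma Fgf_deriv T lam :
  eqXn T.-1 ((1 + 'X) * (Fgf T lam)^`()) (lam *: (Fgf T lam ^+ 2 - Fgf T lam)).
Proof.
set L := lam *: log1p_gf T; set E := euler_gf T.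
rewrite /Fgf derivZ deriv_comp derivZ -/L.
have -> : (1 + 'X) * (2^-1 *: ((E^`() \Po L) * (lam *: (log1p_gf T)^`())))
    = (2^-1 * lam) *: ((E^`() \Po L) * ((1 + 'X) * (log1p_gf T)^`())).
  by rewrite -!mul_polyC polyCM; ring.
apply: (@eqXn_trans _ _ _ ((2^-1 * lam) *: (E^`() \Po L))).
  apply: eqXnZ; rewrite -[X in eqXn _ _ X]mulr1.
  exact/eqXnM/log1p_gf_deriv/eqXn_refl.
apply: (@eqXn_trans _ _ _ ((2^-1 * lam) *: ((2^-1 *: E ^+ 2 - E) \Po L))).
  exact/eqXnZ/eqXn_comp/euler_gf_deriv/coef0_lam_log1p_gf.
rewrite comp_polyB comp_polyZ rmorphXn /= -!mul_polyC polyCM.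
by apply: eqXn_eq; ring.
Qed.

End EulerSeries.

Section APolynomial.

Variable R : fieldType.
Variable lam : R.

Lemma acoef_gt N j : (N < j)%N -> acoef lam N j = 0.
Proof.
case: N => [|N] hj /=; first by case: j hj.
by rewrite ifF ?ifF ?ifF //; apply/negbTE; lia.
Qed.

Lemma acoefS N j :
  acoef lam N.+1 j
  = - j%:R * lam * acoef lam N j.-1 + (N%:R + j.+1%:R * lam) * acoef lam N j.
Proof.
case: j => [|j] /=; first by ring.
case: (ltngtP j N) => hjN.
- by rewrite ifF //; lia.
- by rewrite ifF ?ifF ?acoef_gt ?mulr0 ?addr0 //; lia.
- by rewrite hjN eqxx (@acoef_gt N N.+1) // mulr0 addr0.
Qed.

Fixpoint apoly N : {poly R} :=
  if N is N'.+1 then N'%:R *: apoly N' + lam *: (('X - 'X^2) * (apoly N')^`())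
  else lam^-1 *: 'X.

Lemma coef0_apoly N : (apoly N)`_0 = 0.
Proof.
elim: N => [|N ih] /=; first by rewrite coefZ coefX mulr0.
by rewrite coefD !coefZ mulrBl coefB coefXM coefXnM ih /= mulr0 subrr !mulr0 addr0.
Qed.

Lemma coefS_apoly N j : (apoly N)`_j.+1 = acoef lam N j.
Proof.
elim: N j => [|N ih] j.
  by rewrite /= coefZ coefX; case: j => [|j] /=; rewrite ?mulr1 ?mulr0.
rewrite acoefS /= coefD !coefZ mulrBl coefB coefXM coefXnM /= !coef_deriv ih.
case: j => [|j] /=; first by rewrite subr0; ring.
by rewrite (_ : j.+2 - 2 = j)%N ?ih; [ring | lia].
Qed.

Lemma comp_apoly N (F : {poly R}) :
  apoly N \Po F = \sum_(1 <= i < N.+2) acoef lam N (i - 1) *: F ^+ i.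
Proof.
have hs : (size (apoly N) <= N.+2)%N.
  by apply/leq_sizeP => -[|j] // hj; rewrite coefS_apoly acoef_gt.
rewrite comp_polyE (big_ord_widen0 (f := fun i => (apoly N)`_i *: F ^+ i) hs).
  rewrite -(big_mkord xpredT (fun i => (apoly N)`_i *: F ^+ i)) big_ltn //.
  rewrite coef0_apoly scale0r add0r.
  by apply: eq_big_nat => -[|i] // _; rewrite coefS_apoly subn1.
by move=> i /andP [hi _]; rewrite nth_default ?scale0r.
Qed.

End APolynomial.

Section DerivativesOfF.

Variable R : numFieldType.
Implicit Types (T : nat) (lam : R).

Definition apoly_Fgf T lam N : {poly R} :=
  ((-1) ^+ N * lam) *: (apoly lam N \Po Fgf T lam).

Lemma apoly_FgfS T lam N :
  eqXn T.-1 ((1 + 'X) * (apoly_Fgf T lam N)^`() - N%:R *: apoly_Fgf T lam N)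
    (apoly_Fgf T lam N.+1).
Proof.
rewrite /apoly_Fgf derivZ deriv_comp.
set F := Fgf T lam; set A := apoly lam N; set c := (-1) ^+ N * lam.
apply: (@eqXn_trans _ _ _ (c *: ((A^`() \Po F) * (lam *: (F ^+ 2 - F)))
                          - N%:R *: (c *: (A \Po F)))).
  apply: eqXnB; last exact: eqXn_refl.
  have -> : (1 + 'X) * (c *: ((A^`() \Po F) * F^`()))
      = c *: ((A^`() \Po F) * ((1 + 'X) * F^`())).
    by rewrite -!mul_polyC; ring.
  exact/eqXnZ/eqXnM/Fgf_deriv/eqXn_refl.
apply: eqXn_eq; rewrite /= -/F -/A comp_polyD !comp_polyZ comp_polyM comp_polyB.
rewrite comp_polyX comp_Xn_poly (exprS (-1)) mulN1r -mulNr -/c.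
by rewrite -!mul_polyC !polyCM polyCN; ring.
Qed.

Lemma Fgf_derivn T lam N : lam != 0 ->
  eqXn (T.-1 - N) ((1 + 'X) ^+ N * (Fgf T lam)^`(N)) (apoly_Fgf T lam N).
Proof.
move=> lam0; elim: N => [|N ih].
  apply: eqXn_eq; rewrite /apoly_Fgf /= expr0 !mul1r comp_polyZ comp_polyX.
  by rewrite scalerA mulfV // scale1r.
rewrite pow1pX_derivnS.
apply: (eqXn_trans _ (eqXnW (leq_subr N.+1 T.-1) (apoly_FgfS T lam N))).
apply: eqXnB; last by apply/eqXnZ/(eqXnW _ ih); lia.
apply: eqXnM; first exact: eqXn_refl.
by rewrite subnS; apply: eqXn_deriv.
Qed.

Lemma coef_Fgf T lam m : (m < T)%N ->
  (m`!)%:R * (Fgf T lam)`_m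
  = 2^-1 * \sum_(0 <= n < m.+1) ratr (Euler n) * lam ^+ n * ratr (Stirling1 m n).
Proof.
move=> hm; rewrite -[Fgf T lam]expr1 coef_Fgf_exp // big_mkord mulr_sumr.
by apply: eq_bigr => n _; rewrite Euler_EulerH1 expr1 !mulrA.
Qed.

Lemma Fgf_derivn_inv T lam N : lam != 0 ->
  eqXn (T.-1 - N) (Fgf T lam)^`(N) (inv_pow1pX_gf T N * apoly_Fgf T lam N).
Proof.
move=> lam0; set Q := inv_pow1pX_gf T N.
apply: (@eqXn_trans _ _ _ (Q * ((1 + 'X) ^+ N * (Fgf T lam)^`(N)))).
  rewrite mulrA -[X in eqXn _ X]mul1r; apply: eqXnM; last exact: eqXn_refl.
  by apply/eqXn_sym/(eqXnW (leq_trans (leq_subr N T.-1) (leq_pred T)))/inv_pow1pX_gfP.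
by apply: eqXnM; [exact: eqXn_refl | exact: Fgf_derivn].
Qed.

Lemma fact_coef_inv_pow1pX_apoly_Fgf T lam N k : (k < T)%N ->
  (k`!)%:R * (inv_pow1pX_gf T N * apoly_Fgf T lam N)`_k
  = (-1) ^+ N * lam *
    \sum_(1 <= i < N.+2) acoef lam N (i - 1) *
      \sum_(0 <= l < k.+1) ('C(k, l))%:R * (-1) ^+ l * ((N + l - 1) ^_ l)%:R *
        \sum_(0 <= n < (k - l).+1)
           (2^-1) ^+ i * ratr (EulerH i n) * lam ^+ n * ratr (Stirling1 (k - l) n).
Proof.
move=> hk; set F := Fgf T lam; set Q := inv_pow1pX_gf T N.
have term i (l : 'I_k.+1) :
    ('C(k, l))%:R * (-1) ^+ l * ((N + l - 1) ^_ l)%:R *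
      \sum_(0 <= n < (k - l).+1)
        (2^-1) ^+ i * ratr (EulerH i n) * lam ^+ n * ratr (Stirling1 (k - l) n)
    = (k`!)%:R * Q`_l * (F ^+ i)`_(k - l).
  have hl : (l <= k)%N by rewrite -ltnS.
  rewrite big_mkord -(coef_Fgf_exp (T := T)); last by lia.
  rewrite coef_poly (_ : l < T)%N; last by lia.
  transitivity ((('C(k, l) * (N + l - 1) ^_ l * (k - l)`!)%N)%:R
                * ((-1) ^+ l * (F ^+ i)`_(k - l)) : R); first by rewrite !natrM; ring.
  by rewrite bin_ffact_fact // natrM; ring.
rewrite coefM mulr_sumr.
transitivity (\sum_(l < k.+1) (-1) ^+ N * lam * \sum_(1 <= i < N.+2)
                acoef lam N (i - 1) * ((k`!)%:R * Q`_l * (F ^+ i)`_(k - l))).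
  apply: eq_bigr => l _; rewrite /apoly_Fgf coefZ comp_apoly coef_sum !mulr_sumr.
  by apply: eq_bigr => i _; rewrite coefZ; ring.
rewrite -mulr_sumr exchange_big /=; congr (_ * _); apply: eq_bigr => i _.
by rewrite -mulr_sumr big_mkord; congr (_ * _); apply: eq_bigr => l _; rewrite term.
Qed.

End DerivativesOfF.

Theorem theorem4 (R : numFieldType) (lam : R) (hlam : lam != 0) (k N : nat)
    (hN : (0 < N)%N) :
  2^-1 * \sum_(0 <= n < (k + N).+1)
           ratr (Euler n) * lam ^+ n * ratr (Stirling1 (k + N) n)
  = (-1) ^+ N * lam *
    \sum_(1 <= i < N.+2) acoef lam N (i - 1) *
      \sum_(0 <= l < k.+1) ('C(k, l))%:R * (-1) ^+ l * ((N + l - 1) ^_ l)%:R *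
        \sum_(0 <= n < (k - l).+1)
           (2^-1) ^+ i * ratr (EulerH i n) * lam ^+ n * ratr (Stirling1 (k - l) n).
Proof.
pose T := (k + N).+2.
rewrite [(k + N)%N]addnC -(@coef_Fgf _ T); last by lia.
rewrite -fact_coef_derivn ((eqXnP _ _ _).1 (Fgf_derivn_inv T N hlam)); last by lia.
by rewrite fact_coef_inv_pow1pX_apoly_Fgf // /T; lia.
Qed.
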